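(* Consider a 1D convolutional layer mapping input sequences $w^{i-1}=(w^{i-1}_0,\dots,w^{i-1}_{N-1})$, $w^{i-1}_k\in\mathbb{R}^{c_{i-1}}$, to output sequences $w^i=(w^i_0,\dots,w^i_{N-1})$, $w^i_k\in\mathbb{R}^{c_i}$, via $$w^i_k=\phi_i\Big(b_i+\sum_{j=0}^{\ell_i-1}K^i_jw^{i-1}_{k-j}\Big),\qquad k=0,\dots,N-1,$$ with $w^{i-1}_m:=0$ for $m<0$, where $K^i_j\in\mathbb{R}^{c_i\times c_{i-1}}$, $b_i\in\mathbb{R}^{c_i}$, and $\phi_i(\nu)=(\varphi(\nu_1),\dots,\varphi(\nu_{c_i}))^\top$ with $\varphi:\mathbb{R}\to\mathbb{R}$ slope-restricted on $[0,1]$. Let $n_{x_i}=(\ell_i-1)c_{i-1}$ and let $$A_i=\begin{bmatrix}0&I\\0&0\end{bmatrix},\quad B_i=\begin{bmatrix}0\\ I\end{bmatrix},\quad C_i=\begin{bmatrix}K^i_{\ell_i-1}&\cdots&K^i_1\end{bmatrix},\quad D_i=K^i_0,$$ where $A_i\in\mathbb{R}^{n_{x_i}\times n_{x_i}}$ (the identity block of size $(\ell_i-2)c_{i-1}$) and $B_i\in\mathbb{R}^{n_{x_i}\times c_{i-1}}$ (identity block of size $c_{i-1}$), or let $(A_i,B_i,C_i,D_i)$ be replaced by $(EA_iE^{-1},EB_i,C_iE^{-1},D_i)$ for some invertible $E$. Let $\widetilde Q_i\in\mathbb{S}^{c_i}$, $\widetilde S_i\in\mathbb{R}^{c_i\times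 c_{i-1}}$, $\widetilde R_i\in\mathbb{S}^{c_{i-1}}$. If there exist a positive definite $P_i\in\mathbb{S}^{n_{x_i}}$ and a positive definite diagonal $\Lambda_i\in\mathbb{R}^{c_i\times c_i}$ such that $$\begin{bmatrix}P_i-A_i^\top P_iA_i & -A_i^\top P_iB_i & -C_i^\top\Lambda_i\\ -B_i^\top P_iA_i & \widetilde R_i-B_i^\top P_iB_i & \widetilde S_i^\top-D_i^\top\Lambda_i\\ -\Lambda_iC_i & \widetilde S_i-\Lambda_iD_i & 2\Lambda_i+\widetilde Q_i\end{bmatrix}\succeq 0,$$ then the layer is incrementally $(\widetilde Q_i,\widetilde S_i,\widetilde R_i)$-dissipative, i.e., for every $N\in\mathbb{N}_+$ and all input sequences $w^{i-1}_a,w^{i-1}_b$ of length $N$ with corresponding outputs $w^i_a,w^i_b$, writing $\Delta^i_{k}=w^i_{a,k}-w^i_{b,k}$ and $\Delta^{i-1}_{k}=w^{i-1}_{a,k}-w^{i-1}_{b,k}$, $$\sum_{k=0}^{N-1}\Big({\Delta^i_k}^\top\widetilde Q_i\Delta^i_k+2{\Delta^i_k}^\top\widetilde S_i\Delta^{i-1}_k+{\Delta^{i-1}_k}^\top\widetilde R_i\Delta^{i-1}_k\Big)\ge 0.$$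
   Context: $\mathbb{S}^n$ denotes the real symmetric $n\times n$ matrices. A function $\varphi:\mathbb{R}\to\mathbb{R}$ is slope-restricted on $[0,1]$ if $0\le\frac{\varphi(s)-\varphi(t)}{s-t}\le 1$ for all $s\ne t$. *)

From mathcomp Require Import all_boot all_order all_algebra.
Set Implicit Arguments. Unset Strict Implicit. Unset Printing Implicit Defensive.
Import Order.TTheory GRing.Theory Num.Theory.
Local Open Scope ring_scope.

Definition slope_restricted01 (R : realFieldType) (phi : R -> R) : Prop :=
  forall s t : R, s != t -> 0 <= (phi s - phi t) / (s - t) <= 1.

Definition psdmx (R : realFieldType) (n : nat) (M : 'M[R]_n) : Prop :=
  M^T = M /\ forall v : 'cV[R]_n, 0 <= (v^T *m M *m v) 0 0.
Definition posdefmx (R : realFieldType) (n : nat) (M : 'M[R]_n) : Prop :=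
  M^T = M /\ forall v : 'cV[R]_n, v != 0 -> 0 < (v^T *m M *m v) 0 0.

(* Convolutional layer with kernel length l.+1 (ell_i = l+1), c_{i-1} = m input
   channels, c_i = p output channels, kernels K j : 'M_(p,m), j = 0..l.
   w^i_k = phi(b + sum_{j=0}^{l} K_j w^{i-1}_{k-j}),  w^{i-1}_{k-j} := 0 if k < j. *)
Definition conv_layer (R : realFieldType) (m p l : nat) (phi : R -> R)
    (K : 'I_l.+1 -> 'M[R]_(p, m)) (b : 'cV[R]_p) (w : nat -> 'cV[R]_m) (k : nat)
    : 'cV[R]_p :=
  map_mx phi (b + \sum_(j < l.+1) (if (j <= k)%N then K j *m w (k - j)%N else 0)).

(* State-space matrices, n_x = (ell-1) c_{i-1} = l * m.
   A = [0 I; 0 0] (shift by one block of size m), B = [0; I],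
   C = [K_l ... K_1] (column s lies in block s %/ m, entry s %% m), D = K_0. *)
Definition convA (R : realFieldType) (m l : nat) : 'M[R]_(l * m) :=
  \matrix_(r, s) ((s : nat) == (r + m)%N)%:R.
Definition convB (R : realFieldType) (m l : nat) : 'M[R]_(l * m, m) :=
  \matrix_(r, s) ((r : nat) == ((l.-1) * m + s)%N)%:R.
Definition convC (R : realFieldType) (m p l : nat) (K : 'I_l.+1 -> 'M[R]_(p, m))
    : 'M[R]_(p, l * m) :=
  \matrix_(r, s) \sum_(c < m | (s %% m)%N == (c : nat)) K (inord (l - (s %/ m))%N) r c.
Definition convD (R : realFieldType) (m p l : nat) (K : 'I_l.+1 -> 'M[R]_(p, m))
    : 'M[R]_(p, m) := K ord0.

Definition lmi_mx (R : realFieldType) (n m p : nat)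
    (A : 'M[R]_n) (B : 'M[R]_(n, m)) (C : 'M[R]_(p, n)) (D : 'M[R]_(p, m))
    (P : 'M[R]_n) (Lam : 'M[R]_p)
    (Q : 'M[R]_p) (S : 'M[R]_(p, m)) (Rm : 'M[R]_m) : 'M[R]_(n + m + p) :=
  block_mx
    (block_mx (P - A^T *m P *m A) (- (A^T *m P *m B))
              (- (B^T *m P *m A)) (Rm - B^T *m P *m B))
    (col_mx (- (C^T *m Lam)) (S^T - D^T *m Lam))
    (row_mx (- (Lam *m C)) (S - Lam *m D))
    (2%:R *: Lam + Q).

Definition incr_dissipative (R : realFieldType) (m p : nat)
    (layer : (nat -> 'cV[R]_m) -> nat -> 'cV[R]_p)
    (Q : 'M[R]_p) (S : 'M[R]_(p, m)) (Rm : 'M[R]_m) : Prop :=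
  forall (N : nat), (0 < N)%N -> forall wa wb : nat -> 'cV[R]_m,
    0 <= \sum_(k < N)
      (let dy := layer wa k - layer wb k in
       let du := wa k - wb k in
       (dy^T *m Q *m dy) 0 0 + 2%:R * (dy^T *m S *m du) 0 0
         + (du^T *m Rm *m du) 0 0).

From mathcomp Require Import all_boot all_order all_algebra.
From mathcomp Require Import ring lra zify.
Import Order.TTheory GRing.Theory Num.Theory.
Set Implicit Arguments. Unset Strict Implicit. Unset Printing Implicit Defensive.
Local Open Scope ring_scope.

(* The layer is a Lur'e system: a linear system whose state stores the last [l]
   inputs, x_(k+1) = A x_k + B u_k, v_k = C x_k + D u_k, followed by the static
   nonlinearity w_k = phi (b + v_k).  For two input sequences the differences
   obey the same linear recursion started at the zero state, and the slope
   restriction gives dy_i (dv_i - dy_i) >= 0 componentwise, hence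
   dy^T Lam (dv - dy) >= 0 for a nonnegative diagonal Lam.  Evaluating the LMI at
   (x_k, du_k, dy_k) then shows that V x = x^T P x satisfies
   V x_(k+1) - V x_k <= supply dy_k du_k, and summing telescopes to
   V x_N - V x_0 >= 0 with V x_0 = 0.  Replacing the state x by E x does not
   change the input-output map. *)

Section QuadraticForms.
Variable R : realFieldType.

Lemma mxform_tr n k (x : 'cV[R]_n) (M : 'M[R]_(n, k)) (y : 'cV[R]_k) :
  (x^T *m M *m y) 0 0 = (y^T *m M^T *m x) 0 0.
Proof.
transitivity (((x^T *m M *m y)^T) 0 0); first by rewrite [in RHS]mxE.
by rewrite !trmx_mul trmxK mulmxA.
Qed.

Lemma psdmx_diag_ge0 n (M : 'M[R]_n) i : psdmx M -> 0 <= M i i.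
Proof.
case=> _ /(_ (delta_mx i 0)).
by rewrite trmx_delta -rowE -colE !mxE.
Qed.

Lemma posdefmx_psd n (M : 'M[R]_n) : posdefmx M -> psdmx M.
Proof.
case=> symM posM; split=> // v.
have [->|v0] := eqVneq v 0; last exact/ltW/posM.
by rewrite trmx0 !mul0mx mxE.
Qed.

Lemma diag_mx_form_ge0 n (L : 'M[R]_n) (y w : 'cV[R]_n) :
  is_diag_mx L -> (forall i, 0 <= L i i) -> (forall i, 0 <= y i 0 * w i 0) ->
  0 <= (y^T *m L *m w) 0 0.
Proof.
move=> /is_diag_mxP diagL L_ge0 yw_ge0; rewrite mxE; apply: sumr_ge0 => j _.
rewrite mxE (bigD1 j) //= big1 ?addr0 => [|i ij]; last by rewrite diagL ?mulr0.
by rewrite mxE mulrAC mulr_ge0.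
Qed.

End QuadraticForms.

Lemma slope_restricted01_sector (R : realFieldType) (phi : R -> R) s t :
  slope_restricted01 phi -> 0 <= (phi s - phi t) * ((s - t) - (phi s - phi t)).
Proof.
move=> slope_phi; have [->|st] := eqVneq s t; first by rewrite subrr mul0r.
have /andP[q_ge0 q_le1] := slope_phi s t st.
set q := (phi s - phi t) / (s - t) in q_ge0 q_le1.
have -> : phi s - phi t = q * (s - t) by rewrite /q divfK // subr_eq0.
have -> : q * (s - t) * (s - t - q * (s - t)) = q * (1 - q) * (s - t) ^+ 2 by ring.
by rewrite mulr_ge0 ?sqr_ge0 // mulr_ge0 // subr_ge0.
Qed.

Lemma sector_form_ge0 (R : realFieldType) p (phi : R -> R)
    (Lam : 'M[R]_p) (va vb : 'cV[R]_p) :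
  slope_restricted01 phi -> is_diag_mx Lam -> (forall i, 0 <= Lam i i) ->
  0 <= ((map_mx phi va - map_mx phi vb)^T *m Lam
          *m (va - vb - (map_mx phi va - map_mx phi vb))) 0 0.
Proof.
move=> slope_phi diagLam Lam_ge0; apply: diag_mx_form_ge0 => // i.
by rewrite !mxE slope_restricted01_sector.
Qed.

Definition supply (R : realFieldType) m p
    (Q : 'M[R]_p) (S : 'M[R]_(p, m)) (Rm : 'M[R]_m) (y : 'cV[R]_p) (u : 'cV[R]_m) : R :=
  (y^T *m Q *m y) 0 0 + 2%:R * (y^T *m S *m u) 0 0 + (u^T *m Rm *m u) 0 0.

Definition zero_state_trajectory (R : realFieldType) n m p
    (A : 'M[R]_n) (B : 'M[R]_(n, m)) (C : 'M[R]_(p, n)) (D : 'M[R]_(p, m))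
    (u : nat -> 'cV[R]_m) (v : nat -> 'cV[R]_p) (x : nat -> 'cV[R]_n) : Prop :=
  [/\ x 0%N = 0, forall k, x k.+1 = A *m x k + B *m u k
    & forall k, v k = C *m x k + D *m u k].

Lemma zero_state_trajectory_similar (R : realFieldType) n m p
    (A : 'M[R]_n) (B : 'M[R]_(n, m)) (C : 'M[R]_(p, n)) (D : 'M[R]_(p, m))
    (E : 'M[R]_n) u v x :
  E \in unitmx -> zero_state_trajectory A B C D u v x ->
  zero_state_trajectory (E *m A *m invmx E) (E *m B) (C *m invmx E) D u v (fun k => E *m x k).
Proof.
move=> unitE [x0 x_next v_out]; split=> [|k|k]; first by rewrite x0 mulmx0.
  by rewrite x_next mulmxDr -!mulmxA mulKmx.
by rewrite v_out -mulmxA mulKmx.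
Qed.

Section LureDissipation.
Variables (R : realFieldType) (n m p : nat).
Variables (A : 'M[R]_n) (B : 'M[R]_(n, m)) (C : 'M[R]_(p, n)) (D : 'M[R]_(p, m)).
Variables (P : 'M[R]_n) (Lam Q : 'M[R]_p) (S : 'M[R]_(p, m)) (Rm : 'M[R]_m).
Hypothesis symLam : Lam^T = Lam.

Lemma lmi_mx_form x u y :
  ((col_mx (col_mx x u) y)^T *m lmi_mx A B C D P Lam Q S Rm *m col_mx (col_mx x u) y) 0 0 =
  (x^T *m P *m x) 0 0 - ((A *m x + B *m u)^T *m P *m (A *m x + B *m u)) 0 0
  + supply Q S Rm y u - 2%:R * (y^T *m Lam *m (C *m x + D *m u - y)) 0 0.
Proof.
rewrite /lmi_mx /supply !tr_col_mx !(mul_row_block, mul_row_col, mul_mx_row, mulmxDl).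
rewrite !linearD /= !trmx_mul.
rewrite !(mulmxDl, mulmxDr, mulmxBl, mulmxBr, mulNmx, mulmxN, mulmxA).
rewrite ![fun_of_matrix (_ + _) 0 0]mxE ![fun_of_matrix (- _) 0 0]mxE.

have Cx : (x^T *m C^T *m Lam *m y) 0 0 = (y^T *m Lam *m C *m x) 0 0.
  by rewrite -(mulmxA x^T) mxform_tr !trmx_mul trmxK symLam mulmxA.
have Su : (u^T *m S^T *m y) 0 0 = (y^T *m S *m u) 0 0.
  by rewrite mxform_tr trmxK.
have Du : (u^T *m D^T *m Lam *m y) 0 0 = (y^T *m Lam *m D *m u) 0 0.
  by rewrite -(mulmxA u^T) mxform_tr !trmx_mul trmxK symLam mulmxA.
rewrite Cx Su Du -scalemxAr -scalemxAl [fun_of_matrix (_ *: _) 0 0]mxE.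
ring.
Qed.

Hypothesis psd_lmi : psdmx (lmi_mx A B C D P Lam Q S Rm).

Lemma lmi_storage_step x u y :
  0 <= (y^T *m Lam *m (C *m x + D *m u - y)) 0 0 ->
  ((A *m x + B *m u)^T *m P *m (A *m x + B *m u)) 0 0 - (x^T *m P *m x) 0 0
    <= supply Q S Rm y u.
Proof. by have := psd_lmi.2 (col_mx (col_mx x u) y); rewrite lmi_mx_form; lra. Qed.

Lemma lmi_dissipative u v x y N :
  psdmx P -> zero_state_trajectory A B C D u v x ->
  (forall k, 0 <= ((y k)^T *m Lam *m (v k - y k)) 0 0) ->
  0 <= \sum_(k < N) supply Q S Rm (y k) (u k).
Proof.
move=> psdP [x0 x_next v_out] sector.
pose V k := ((x k)^T *m P *m x k) 0 0.
have V0 : V 0%N = 0 by rewrite /V x0 trmx0 !mul0mx mxE.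
apply: le_trans (_ : 0 <= V N - V 0%N) _; first by rewrite V0 subr0 psdP.2.
rewrite -(telescope_sumr V (leq0n N)) big_mkord; apply: ler_sum => k _.
by rewrite /V x_next lmi_storage_step // -v_out.
Qed.

End LureDissipation.

Lemma big_ord_indicator (R : realFieldType) n t (F : nat -> R) :
  \sum_(s < n) ((s : nat) == t)%:R * F s = if (t < n)%N then F t else 0.
Proof.
under eq_bigr do rewrite mulr_natl mulrb.
by rewrite -big_mkcond big_ord1_eq.
Qed.

Lemma big_ord_mul (R : realFieldType) l m (F : nat -> R) :
  \sum_(s < l * m) F s = \sum_(i < l) \sum_(c < m) F (i * m + c)%N.
Proof.
rewrite -(big_mkord xpredT F) big_nat_mul big_mkord; apply: eq_bigr => i _.
by rewrite -{1}(add0n (i * m)%N) big_addn mulSn addnK big_mkord; under eq_bigr do rewrite addnC.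
Qed.

Lemma big_ord_pick (R : realFieldType) m (c : 'I_m) (F : 'I_m -> R) :
  \sum_(c' < m | (c : nat) == c') F c' = F c.
Proof. by rewrite (eq_bigl (pred1 c)) ?big_pred1_eq // => c'; rewrite /= eq_sym. Qed.

Lemma ord_mul_bounds l m (s : 'I_(l * m)) :
  [/\ (0 < m)%N, (s %/ m < l)%N & (s %% m < m)%N].
Proof.
have m_gt0 : (0 < m)%N by move: (s : nat) (ltn_ord s); case: (posnP m) => // ->; rewrite muln0.
by rewrite ltn_divLR ?ltn_pmod.
Qed.

Section ConvolutionRealization.
Variables (R : realFieldType) (m p l : nat).

Definition past_input (u : nat -> 'cV[R]_m) (k d : nat) : 'cV[R]_m :=
  if (d <= k)%N then u (k - d)%N else 0.

Lemma past_input0 u k : past_input u k 0 = u k.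
Proof. by rewrite /past_input subn0. Qed.

Lemma past_inputS u k d : past_input u k.+1 d.+1 = past_input u k d.
Proof. by rewrite /past_input ltnS subSS. Qed.

Lemma past_input_start u d : past_input u 0 d.+1 = 0.
Proof. by []. Qed.

Lemma past_inputB u w k d :
  past_input (fun i => u i - w i) k d = past_input u k d - past_input w k d.
Proof. by rewrite /past_input; case: ifP; rewrite ?subr0. Qed.

Lemma conv_layerE phi (K : 'I_l.+1 -> 'M[R]_(p, m)) b w k :
  conv_layer phi K b w k = map_mx phi (b + \sum_(j < l.+1) K j *m past_input w k j).
Proof.
congr (map_mx phi (b + _)); apply: eq_bigr => j _.
by rewrite /past_input; case: ifP; rewrite ?mulmx0.
Qed.

(* Block [i < l] (entries [i * m + c], [c < m]) holds the input [l - i] steps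
   back, so the state at time [k] stacks u_(k-l), ..., u_(k-1).  As in [convC],
   entry [s %% m] is read through a sum filtered by [s %% m == c], which avoids
   building an ordinal. *)
Definition conv_state (u : nat -> 'cV[R]_m) (k : nat) : 'cV[R]_(l * m) :=
  \col_(s < l * m) \sum_(c < m | (s %% m)%N == c) past_input u k (l - s %/ m) c 0.

Lemma conv_state0 u : conv_state u 0 = 0.
Proof.
apply/matrixP => s j; rewrite !mxE; apply: big1 => c _.
have [_ s_div _] := ord_mul_bounds s.
by have := s_div; rewrite -subn_gt0; case: (l - _)%N => // d _; rewrite past_input_start mxE.
Qed.

Lemma convA_mul_conv_state u k (s : 'I_(l * m)) :
  (convA R m l *m conv_state u k) s 0 =
  if (s + m < l * m)%N
  then \sum_(c < m | ((s + m) %% m)%N == c) past_input u k (l - (s + m) %/ m) c 0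
  else 0.
Proof.
rewrite mxE; under eq_bigr do rewrite !mxE.
exact: (big_ord_indicator _ _
  (fun t => \sum_(c < m | (t %% m)%N == c) past_input u k (l - t %/ m) c 0)).
Qed.

Lemma convB_mul (v : 'cV[R]_m) (s : 'I_(l * m)) :
  (convB R m l *m v) s 0 =
  if (s %/ m == l.-1)%N then \sum_(c < m | (s %% m)%N == c) v c 0 else 0.
Proof.
have [m_gt0 _ _] := ord_mul_bounds s.
have s_last (c : 'I_m) : ((s : nat) == l.-1 * m + c)%N = (s %/ m == l.-1)%N && (s %% m == c)%N.
  apply/eqP/andP => [->|[/eqP s_div /eqP s_mod]]; last by rewrite (divn_eq s m) s_div s_mod.
  by rewrite divnMDl // modnMDl divn_small // modn_small // addn0.
rewrite mxE; under eq_bigr do rewrite !mxE s_last mulr_natl mulrb.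
by case: eqP => _ /=; [rewrite -big_mkcond | rewrite big1].
Qed.

Lemma conv_state_next u k :
  conv_state u k.+1 = convA R m l *m conv_state u k + convB R m l *m u k.
Proof.
apply/matrixP => s j; rewrite ord1 [RHS]mxE convA_mul_conv_state convB_mul mxE.
have [m_gt0 s_div s_mod] := ord_mul_bounds s.
have sE := divn_eq s m.
have [s_last|s_not_last] := eqVneq (s %/ m)%N l.-1.
  have -> : (s + m < l * m)%N = false by apply/negbTE; rewrite -leqNgt; nia.
  have -> : (l - s %/ m = 1)%N by lia.
  by rewrite add0r past_inputS past_input0.
have s_next : (s + m = (s %/ m).+1 * m + s %% m)%N by rewrite {1}sE mulSn; lia.
have -> : (s + m < l * m)%N by rewrite s_next; nia.
have -> : (l - s %/ m = (l - (s %/ m).+1).+1)%N by lia.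
by rewrite addr0 s_next divnMDl // modnMDl modn_mod (divn_small s_mod) addn0 past_inputS.
Qed.

Lemma conv_sum_realization (K : 'I_l.+1 -> 'M[R]_(p, m)) u k :
  \sum_(j < l.+1) K j *m past_input u k j = convC K *m conv_state u k + convD K *m u k.
Proof.
rewrite big_ord_recl past_input0 addrC; congr (_ + _).
apply/matrixP => r j; rewrite ord1 summxE mxE.
under [RHS]eq_bigr do rewrite !mxE.
rewrite (@big_ord_mul _ l m (fun s =>
  (\sum_(c < m | (s %% m)%N == c) K (inord (l - s %/ m)) r c) *
  \sum_(c < m | (s %% m)%N == c) past_input u k (l - s %/ m) c 0)).
rewrite (reindex_inj rev_ord_inj); apply: eq_bigr => i _ /=.
have i_lt := ltn_ord i.
have -> : bump 0 (l - i.+1) = (l - i)%N by rewrite /bump /= add1n subnSK.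
have -> : lift ord0 (rev_ord i) = inord (l - i).
  by apply: val_inj; rewrite /= /bump /= add1n subnSK // inordK // ltnS leq_subr.
rewrite mxE; apply: eq_bigr => c _.
have m_gt0 : (0 < m)%N by apply: leq_ltn_trans (ltn_ord c).
by rewrite divnMDl // modnMDl divn_small // modn_small // addn0 !big_ord_pick.
Qed.

Lemma conv_state_trajectory (K : 'I_l.+1 -> 'M[R]_(p, m)) u :
  zero_state_trajectory (convA R m l) (convB R m l) (convC K) (convD K)
    u (fun k => \sum_(j < l.+1) K j *m past_input u k j) (conv_state u).
Proof.
split=> [|k|k]; [exact: conv_state0 | exact: conv_state_next | exact: conv_sum_realization].
Qed.
End ConvolutionRealization.

Theorem lemma4 (R : realFieldType) (m p l : nat) (phi : R -> R)
    (K : 'I_l.+1 -> 'M[R]_(p, m)) (b : 'cV[R]_p)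
    (Q : 'M[R]_p) (S : 'M[R]_(p, m)) (Rm : 'M[R]_m)
    (E : 'M[R]_(l * m)) :
  slope_restricted01 phi ->
  Q^T = Q -> Rm^T = Rm ->
  E \in unitmx ->
  (exists (P : 'M[R]_(l * m)) (Lam : 'M[R]_p),
      posdefmx P /\ is_diag_mx Lam /\ posdefmx Lam /\
      psdmx (lmi_mx (E *m convA R m l *m invmx E) (E *m convB R m l)
                    (convC K *m invmx E) (convD K) P Lam Q S Rm)) ->
  incr_dissipative (conv_layer phi K b) Q S Rm.
Proof.
move=> slope_phi _ _ unitE [P [Lam [posP [diagLam [posLam psd_lmi]]]]] N _ wa wb.
pose u k := wa k - wb k.
pose v k := \sum_(j < l.+1) K j *m past_input u k j.
have v_diff k : (b + \sum_(j < l.+1) K j *m past_input wa k j)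
              - (b + \sum_(j < l.+1) K j *m past_input wb k j) = v k.
  rewrite /v opprD addrACA subrr add0r -sumrB.
  by apply: eq_bigr => j _; rewrite past_inputB mulmxBr.
apply: (lmi_dissipative posLam.1 psd_lmi (u := u) (v := v)
          (y := fun k => conv_layer phi K b wa k - conv_layer phi K b wb k)).
- exact: posdefmx_psd.
- exact/zero_state_trajectory_similar/conv_state_trajectory.
- move=> k; rewrite !conv_layerE -v_diff.
  by apply: sector_form_ge0 => // i; apply/psdmx_diag_ge0/posdefmx_psd.
Qed.
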